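(* Let $(A,B)$ be an imprecise copula. Then $(A,A_M)$ and $(B_O,B)$ are imprecise copulas, and $A\le A_M\le B$ and $A\le B_O\le B$; i.e. there is an imprecise copula contained in $(A,B)$ with the same lower bound and one with the same upper bound.
   Context: Quasi-copula: $Q:[0,1]^2\to\mathbb{R}$ grounded, with neutral element $1$, with $V_Q(R)\ge0$ for each rectangle having a side on the boundary of $[0,1]^2$, where $V_Q([s_1,s_2]\times[t_1,t_2])=Q(s_1,t_1)+Q(s_2,t_2)-Q(s_2,t_1)-Q(s_1,t_2)$. Defects: $\mathcal{R}_\nearrow(\mathbf{x}),\mathcal{R}_\swarrow(\mathbf{x}),\mathcal{R}_\nwarrow(\mathbf{x}),\mathcal{R}_\searrow(\mathbf{x})$ are the sets of (possibly degenerate) rectangles in $[0,1]^2$ with $\mathbf{x}$ as southwest, northeast, southeast, northwest corner; $D^Q_\bullet(\mathbf{x})=\inf\{V_Q(R):R\in\mathcal{R}_\bullet(\mathbf{x})\}$; $D^Q_M=\min(D^Q_\nearrow,D^Q_\swarrow)$, $D^Q_O=\min(D^Q_\nwarrow,D^Q_\searrow)$; $Q_M=Q-D^Q_M$, $Q_O=Q+D^Q_O$. Imprecise copula: a pair $(A,B)$ of grounded functions with neutral element 1 satisfying, for all rectangles with SW, SE, NE, NW corners $\mathbf{a},\mathbf{b},\mathbf{c},\mathbf{d}$: $A(\mathbf{a})+B(\mathbf{c})-A(\mathbf{b})-A(\mathbf{d})\ge0$, $B(\mathbf{a})+A(\mathbf{c})-A(\mathbf{b})-A(\mathbf{d})\ge0$,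 $B(\mathbf{a})+B(\mathbf{c})-B(\mathbf{b})-A(\mathbf{d})\ge0$, $B(\mathbf{a})+B(\mathbf{c})-A(\mathbf{b})-B(\mathbf{d})\ge0$. In an imprecise copula $A,B$ are quasi-copulas with $A\le B$. *)

From Stdlib Require Import Reals Lra ClassicalEpsilon.
Open Scope R_scope.

(* Functions on the unit square are represented as R -> R -> R;
   only their values on [0,1]^2 matter. *)
Definition I01 (x : R) : Prop := 0 <= x <= 1.

Definition Vol (Q : R -> R -> R) (s1 s2 t1 t2 : R) : R :=
  Q s1 t1 + Q s2 t2 - Q s2 t1 - Q s1 t2.

Definition rect (s1 s2 t1 t2 : R) : Prop :=
  0 <= s1 /\ s1 <= s2 /\ s2 <= 1 /\ 0 <= t1 /\ t1 <= t2 /\ t2 <= 1.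

Definition grounded (Q : R -> R -> R) : Prop :=
  (forall s, I01 s -> Q s 0 = 0) /\ (forall t, I01 t -> Q 0 t = 0).

Definition neutral1 (Q : R -> R -> R) : Prop :=
  (forall s, I01 s -> Q s 1 = s) /\ (forall t, I01 t -> Q 1 t = t).

(* Infimum of a set of reals, via classical choice of a greatest lower bound
   (defects of quasi-copulas are infima of bounded nonempty sets). *)
Definition is_glb (S : R -> Prop) (m : R) : Prop :=
  (forall x, S x -> m <= x) /\ (forall b, (forall x, S x -> b <= x) -> b <= m).

Definition Rinf (S : R -> Prop) : R :=
  epsilon (inhabits 0) (fun m => is_glb S m).

Definition vols_NE (Q : R -> R -> R) (a b : R) : R -> Prop :=
  fun v => exists s2 t2, rect a s2 b t2 /\ v = Vol Q a s2 b t2.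
Definition vols_SW (Q : R -> R -> R) (a b : R) : R -> Prop :=
  fun v => exists s1 t1, rect s1 a t1 b /\ v = Vol Q s1 a t1 b.
Definition vols_NW (Q : R -> R -> R) (a b : R) : R -> Prop :=
  fun v => exists s1 t2, rect s1 a b t2 /\ v = Vol Q s1 a b t2.
Definition vols_SE (Q : R -> R -> R) (a b : R) : R -> Prop :=
  fun v => exists s2 t1, rect a s2 t1 b /\ v = Vol Q a s2 t1 b.

Definition D_NE Q a b := Rinf (vols_NE Q a b).
Definition D_SW Q a b := Rinf (vols_SW Q a b).
Definition D_NW Q a b := Rinf (vols_NW Q a b).
Definition D_SE Q a b := Rinf (vols_SE Q a b).

Definition D_M (Q : R -> R -> R) (a b : R) : R := Rmin (D_NE Q a b) (D_SW Q a b).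
Definition D_O (Q : R -> R -> R) (a b : R) : R := Rmin (D_NW Q a b) (D_SE Q a b).

Definition Q_M (Q : R -> R -> R) : R -> R -> R := fun a b => Q a b - D_M Q a b.
Definition Q_O (Q : R -> R -> R) : R -> R -> R := fun a b => Q a b + D_O Q a b.

(* Imprecise copula; rectangle [s1,s2]x[t1,t2] with corners
   a = (s1,t1) SW, b = (s2,t1) SE, c = (s2,t2) NE, d = (s1,t2) NW. *)
Definition imprecise_copula (A B : R -> R -> R) : Prop :=
  grounded A /\ neutral1 A /\ grounded B /\ neutral1 B /\
  forall s1 s2 t1 t2, rect s1 s2 t1 t2 ->
    A s1 t1 + B s2 t2 - A s2 t1 - A s1 t2 >= 0 /\
    B s1 t1 + A s2 t2 - A s2 t1 - A s1 t2 >= 0 /\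
    B s1 t1 + B s2 t2 - B s2 t1 - A s1 t2 >= 0 /\
    B s1 t1 + B s2 t2 - A s2 t1 - B s1 t2 >= 0.

Definition leQ (F G : R -> R -> R) : Prop :=
  forall s t, I01 s -> I01 t -> F s t <= G s t.

(* For an imprecise copula (A,B) the four defining inequalities say exactly
   that V_A(R) >= (A-B)(x) when x is the SW or NE corner of R, and
   V_B(R) >= (A-B)(x) when x is the NW or SE corner of R.  Hence the defects
   D_M = D^A_M and D_O = D^B_O are greatest lower bounds of sets of volumes
   containing 0, and A - B <= D <= 0; as A = B on the boundary of the unit
   square, both defects vanish there.  This gives the order relations and the
   boundary conditions of (A, A_M) and (B_O, B).

   The heart of the proof is an exchange inequality valid for ANY function Q
   whose defect D^Q_M is a greatest lower bound (lemma defect_M_exchange_SE):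
   D(SW) + D(NE) <= V_Q(R) + D(SE): for every rectangle R' cornered at the
   SE corner of R, V(R) + V(R') is a sum of volumes of two rectangles cornered
   at the SW and at the NE corner of R.  The NW
   variant follows by transposing the square, and the two inequalities for
   D_O by mirroring t |-> 1 - t, which exchanges the two kinds of defects.
   The four imprecise-copula inequalities for (A, A_M) and (B_O, B) are then
   linear consequences of these facts. *)

From Stdlib Require Import Reals Lra ClassicalEpsilon.
Open Scope R_scope.

Ltac solve_square := unfold rect, I01 in *; lra.

Lemma Rinf_is_glb (S : R -> Prop) (x0 L : R) :
  S x0 -> (forall x, S x -> L <= x) -> is_glb S (Rinf S).
Proof.
  intros Hx0 HL. unfold Rinf. apply epsilon_spec.
  destruct (completeness (fun y => S (- y))) as [m [Hub Hlub]].
  - exists (- L). intros y Hy. specialize (HL _ Hy). lra.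
  - exists (- x0). rewrite Ropp_involutive. exact Hx0.
  - exists (- m). split.
    + intros x Hx.
      assert (m >= - x) by (apply Rle_ge, Hub; rewrite Ropp_involutive; exact Hx).
      lra.
    + intros b Hb.
      assert (m <= - b) by (apply Hlub; intros y Hy; specialize (Hb _ Hy); lra).
      lra.
Qed.

Lemma is_glb_union_Rmin (S1 S2 : R -> Prop) (m1 m2 : R) :
  is_glb S1 m1 -> is_glb S2 m2 -> is_glb (fun x => S1 x \/ S2 x) (Rmin m1 m2).
Proof.
  intros [lb1 glb1] [lb2 glb2]. split.
  - intros x [Hx | Hx].
    + apply Rle_trans with m1; [apply Rmin_l | auto].
    + apply Rle_trans with m2; [apply Rmin_r | auto].
  - intros b Hb. apply Rmin_glb; [apply glb1 | apply glb2]; auto.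
Qed.

Lemma is_glb_ext (S S' : R -> Prop) (m : R) :
  (forall x, S x <-> S' x) -> is_glb S m -> is_glb S' m.
Proof.
  intros HS [lb glb]. split.
  - intros x Hx. apply lb, HS, Hx.
  - intros b Hb. apply glb. intros x Hx. apply Hb, HS, Hx.
Qed.

Definition transpose (F : R -> R -> R) : R -> R -> R := fun s t => F t s.

Lemma Vol_transpose (Q : R -> R -> R) (s1 s2 t1 t2 : R) :
  Vol (transpose Q) s1 s2 t1 t2 = Vol Q t1 t2 s1 s2.
Proof. unfold Vol, transpose. ring. Qed.

(* The reflection t |-> 1 - t of the second coordinate; it reverses
   orientation, so volumes are preserved by the reflected function -Q. *)
Definition mirror (F : R -> R -> R) : R -> R -> R := fun s t => F s (1 - t).
Definition mirror_vol (Q : R -> R -> R) : R -> R -> R := fun s t => - Q s (1 - t).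

Lemma one_minus_involutive (x : R) : 1 - (1 - x) = x.
Proof. ring. Qed.

Lemma mirror_involutive (F : R -> R -> R) (s t : R) : mirror F s (1 - t) = F s t.
Proof. unfold mirror. rewrite one_minus_involutive. reflexivity. Qed.

Lemma Vol_mirror (Q : R -> R -> R) (s1 s2 t1 t2 : R) :
  Vol (mirror_vol Q) s1 s2 t1 t2 = Vol Q s1 s2 (1 - t2) (1 - t1).
Proof. unfold Vol, mirror_vol. ring. Qed.

Lemma rect_mirror (s1 s2 t1 t2 : R) :
  rect s1 s2 t1 t2 -> rect s1 s2 (1 - t2) (1 - t1).
Proof. intros. solve_square. Qed.

Definition is_defect_M (Q D : R -> R -> R) : Prop :=
  forall a b, I01 a -> I01 b ->
    is_glb (fun v => vols_NE Q a b v \/ vols_SW Q a b v) (D a b).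

Definition is_defect_O (Q D : R -> R -> R) : Prop :=
  forall a b, I01 a -> I01 b ->
    is_glb (fun v => vols_NW Q a b v \/ vols_SE Q a b v) (D a b).

Definition M_bounded_by (Q L : R -> R -> R) : Prop :=
  forall s1 s2 t1 t2, rect s1 s2 t1 t2 ->
    L s1 t1 <= Vol Q s1 s2 t1 t2 /\ L s2 t2 <= Vol Q s1 s2 t1 t2.

Definition O_bounded_by (Q L : R -> R -> R) : Prop :=
  forall s1 s2 t1 t2, rect s1 s2 t1 t2 ->
    L s1 t2 <= Vol Q s1 s2 t1 t2 /\ L s2 t1 <= Vol Q s1 s2 t1 t2.

Lemma Vol_degenerate (Q : R -> R -> R) (a b : R) : 0 = Vol Q a a b b.
Proof. unfold Vol. ring. Qed.

Lemma D_M_is_defect (Q L : R -> R -> R) : M_bounded_by Q L -> is_defect_M Q (D_M Q).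
Proof.
  intros HL a b ha hb. apply is_glb_union_Rmin; apply (Rinf_is_glb _ 0 (L a b)).
  - exists a, b. split; [solve_square | apply Vol_degenerate].
  - intros x [s2 [t2 [Hr ->]]]. apply (HL _ _ _ _ Hr).
  - exists a, b. split; [solve_square | apply Vol_degenerate].
  - intros x [s1 [t1 [Hr ->]]]. apply (HL _ _ _ _ Hr).
Qed.

Lemma D_O_is_defect (Q L : R -> R -> R) : O_bounded_by Q L -> is_defect_O Q (D_O Q).
Proof.
  intros HL a b ha hb. apply is_glb_union_Rmin; apply (Rinf_is_glb _ 0 (L a b)).
  - exists a, b. split; [solve_square | apply Vol_degenerate].
  - intros x [s1 [t2 [Hr ->]]]. apply (HL _ _ _ _ Hr).
  - exists a, b. split; [solve_square | apply Vol_degenerate].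
  - intros x [s2 [t1 [Hr ->]]]. apply (HL _ _ _ _ Hr).
Qed.

Section DefectM.
Variables Q D : R -> R -> R.
Hypothesis HD : is_defect_M Q D.

Lemma defect_M_le_SW (s1 s2 t1 t2 : R) :
  rect s1 s2 t1 t2 -> D s1 t1 <= Vol Q s1 s2 t1 t2.
Proof.
  intros Hr. apply (HD s1 t1); [solve_square | solve_square |].
  left. exists s2, t2. auto.
Qed.

Lemma defect_M_le_NE (s1 s2 t1 t2 : R) :
  rect s1 s2 t1 t2 -> D s2 t2 <= Vol Q s1 s2 t1 t2.
Proof.
  intros Hr. apply (HD s2 t2); [solve_square | solve_square |].
  right. exists s1, t1. auto.
Qed.

Lemma defect_M_greatest (a b c : R) : I01 a -> I01 b ->
  (forall s2 t2, rect a s2 b t2 -> c <= Vol Q a s2 b t2) ->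
  (forall s1 t1, rect s1 a t1 b -> c <= Vol Q s1 a t1 b) -> c <= D a b.
Proof.
  intros ha hb HNE HSW. apply (HD a b ha hb).
  intros v [[s2 [t2 [Hr ->]]] | [s1 [t1 [Hr ->]]]]; auto.
Qed.

Lemma defect_M_le0 (a b : R) : I01 a -> I01 b -> D a b <= 0.
Proof.
  intros ha hb. rewrite (Vol_degenerate Q a b). apply defect_M_le_SW. solve_square.
Qed.

Lemma defect_M_ge (L : R -> R -> R) (a b : R) :
  M_bounded_by Q L -> I01 a -> I01 b -> L a b <= D a b.
Proof.
  intros HL ha hb. apply defect_M_greatest; auto; intros x y Hr; apply (HL _ _ _ _ Hr).
Qed.

(* For a rectangle
   R' cornered at the SE corner of R, V(R) + V(R') is the sum of the volumes of
   a rectangle cornered at the SW corner and one cornered at the NE corner of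
   R; thus D(SW) + D(NE) - V(R) is a lower bound of the volumes defining
   D(SE). *)
Lemma defect_M_exchange_SE (s1 s2 t1 t2 : R) : rect s1 s2 t1 t2 ->
  D s1 t1 + D s2 t2 <= Vol Q s1 s2 t1 t2 + D s2 t1.
Proof.
  intros Hr.
  enough (D s1 t1 + D s2 t2 - Vol Q s1 s2 t1 t2 <= D s2 t1) by lra.
  apply defect_M_greatest; [solve_square | solve_square | |].
  - intros s3 t3 Hr'. destruct (Rle_dec t3 t2).
    + pose proof (defect_M_le_SW s1 s3 t1 t3 ltac:(solve_square)).
      pose proof (defect_M_le_NE s1 s2 t3 t2 ltac:(solve_square)).
      unfold Vol in *. lra.
    + pose proof (defect_M_le_SW s1 s3 t1 t2 ltac:(solve_square)).
      pose proof (defect_M_le_SW s2 s3 t2 t3 ltac:(solve_square)).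
      unfold Vol in *. lra.
  - intros s0 t0 Hr'. destruct (Rle_dec s1 s0).
    + pose proof (defect_M_le_SW s1 s0 t1 t2 ltac:(solve_square)).
      pose proof (defect_M_le_NE s0 s2 t0 t2 ltac:(solve_square)).
      unfold Vol in *. lra.
    + pose proof (defect_M_le_NE s0 s1 t0 t1 ltac:(solve_square)).
      pose proof (defect_M_le_NE s1 s2 t0 t2 ltac:(solve_square)).
      unfold Vol in *. lra.
Qed.

End DefectM.

Lemma defect_M_transpose (Q D : R -> R -> R) :
  is_defect_M Q D -> is_defect_M (transpose Q) (transpose D).
Proof.
  intros HD a b ha hb. apply is_glb_ext with (2 := HD b a hb ha).
  intros v. split;
    intros [[x [y [Hr ->]]] | [x [y [Hr ->]]]]; [left | right | left | right];
    exists y, x; (split; [solve_square | rewrite Vol_transpose; reflexivity]).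
Qed.

Lemma defect_M_exchange_NW (Q D : R -> R -> R) (s1 s2 t1 t2 : R) :
  is_defect_M Q D -> rect s1 s2 t1 t2 ->
  D s1 t1 + D s2 t2 <= Vol Q s1 s2 t1 t2 + D s1 t2.
Proof.
  intros HD Hr.
  pose proof (defect_M_exchange_SE _ _ (defect_M_transpose Q D HD) t1 t2 s1 s2
                ltac:(solve_square)) as H.
  rewrite Vol_transpose in H. exact H.
Qed.

Lemma defect_O_mirror (Q D : R -> R -> R) :
  is_defect_O Q D -> is_defect_M (mirror_vol Q) (mirror D).
Proof.
  intros HD a b ha hb.
  apply is_glb_ext with (2 := HD a (1 - b) ha ltac:(solve_square)).
  intros v. split.
  - intros [[s1 [t2 [Hr ->]]] | [s2 [t1 [Hr ->]]]].
    + right. exists s1, (1 - t2). split; [solve_square |].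
      rewrite Vol_mirror, one_minus_involutive. reflexivity.
    + left. exists s2, (1 - t1). split; [solve_square |].
      rewrite Vol_mirror, one_minus_involutive. reflexivity.
  - intros [[s2 [t2 [Hr ->]]] | [s1 [t1 [Hr ->]]]].
    + right. exists s2, (1 - t2). split; [solve_square |].
      rewrite Vol_mirror. reflexivity.
    + left. exists s1, (1 - t1). split; [solve_square |].
      rewrite Vol_mirror. reflexivity.
Qed.

Section DefectO.
Variables Q D : R -> R -> R.
Hypothesis HD : is_defect_O Q D.

Let HM : is_defect_M (mirror_vol Q) (mirror D) := defect_O_mirror Q D HD.

Lemma defect_O_le_NW (s1 s2 t1 t2 : R) :
  rect s1 s2 t1 t2 -> D s1 t2 <= Vol Q s1 s2 t1 t2.
Proof.
  intros Hr. pose proof (defect_M_le_SW _ _ HM _ _ _ _ (rect_mirror _ _ _ _ Hr)) as H.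
  rewrite Vol_mirror, !one_minus_involutive, mirror_involutive in H. exact H.
Qed.

Lemma defect_O_le_SE (s1 s2 t1 t2 : R) :
  rect s1 s2 t1 t2 -> D s2 t1 <= Vol Q s1 s2 t1 t2.
Proof.
  intros Hr. pose proof (defect_M_le_NE _ _ HM _ _ _ _ (rect_mirror _ _ _ _ Hr)) as H.
  rewrite Vol_mirror, !one_minus_involutive, mirror_involutive in H. exact H.
Qed.

Lemma defect_O_exchange_SW (s1 s2 t1 t2 : R) : rect s1 s2 t1 t2 ->
  D s2 t1 + D s1 t2 <= Vol Q s1 s2 t1 t2 + D s1 t1.
Proof.
  intros Hr.
  pose proof (defect_M_exchange_NW _ _ _ _ _ _ HM (rect_mirror _ _ _ _ Hr)) as H.
  rewrite Vol_mirror, !one_minus_involutive, !mirror_involutive in H. lra.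
Qed.

Lemma defect_O_exchange_NE (s1 s2 t1 t2 : R) : rect s1 s2 t1 t2 ->
  D s2 t1 + D s1 t2 <= Vol Q s1 s2 t1 t2 + D s2 t2.
Proof.
  intros Hr.
  pose proof (defect_M_exchange_SE _ _ HM _ _ _ _ (rect_mirror _ _ _ _ Hr)) as H.
  rewrite Vol_mirror, !one_minus_involutive, !mirror_involutive in H. lra.
Qed.

Lemma defect_O_le0 (a b : R) : I01 a -> I01 b -> D a b <= 0.
Proof.
  intros ha hb. rewrite (Vol_degenerate Q a b). apply defect_O_le_NW. solve_square.
Qed.

Lemma defect_O_ge (L : R -> R -> R) (a b : R) :
  O_bounded_by Q L -> I01 a -> I01 b -> L a b <= D a b.
Proof.
  intros HL ha hb. apply (HD a b ha hb).
  intros v [[s1 [t2 [Hr ->]]] | [s2 [t1 [Hr ->]]]]; apply (HL _ _ _ _ Hr).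
Qed.

End DefectO.

Definition on_boundary (s t : R) : Prop :=
  I01 s /\ I01 t /\ (s = 0 \/ s = 1 \/ t = 0 \/ t = 1).

Lemma boundary_agree (Q Q' : R -> R -> R) (s t : R) :
  grounded Q -> neutral1 Q -> grounded Q' -> neutral1 Q' ->
  on_boundary s t -> Q s t = Q' s t.
Proof.
  intros [g1 g2] [n1 n2] [g1' g2'] [n1' n2'] (hs & ht & [-> | [-> | [-> | ->]]]).
  - rewrite g2, g2'; auto.
  - rewrite n2, n2'; auto.
  - rewrite g1, g1'; auto.
  - rewrite n1, n1'; auto.
Qed.

Lemma boundary_transfer (Q Q' : R -> R -> R) :
  (forall s t, on_boundary s t -> Q' s t = Q s t) ->
  grounded Q -> neutral1 Q -> grounded Q' /\ neutral1 Q'.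
Proof.
  intros Heq [g1 g2] [n1 n2].
  split; split; intros x hx; rewrite Heq by (unfold on_boundary, I01 in *; lra); auto.
Qed.

Section ImpreciseCopula.
Variables A B : R -> R -> R.
Hypothesis HAB : imprecise_copula A B.

Lemma imprecise_M_bounded : M_bounded_by A (fun s t => A s t - B s t).
Proof.
  intros s1 s2 t1 t2 Hr. destruct HAB as (_ & _ & _ & _ & Hc).
  destruct (Hc _ _ _ _ Hr) as (c1 & c2 & c3 & c4). unfold Vol. split; lra.
Qed.

Lemma imprecise_O_bounded : O_bounded_by B (fun s t => A s t - B s t).
Proof.
  intros s1 s2 t1 t2 Hr. destruct HAB as (_ & _ & _ & _ & Hc).
  destruct (Hc _ _ _ _ Hr) as (c1 & c2 & c3 & c4). unfold Vol. split; lra.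
Qed.

Lemma imprecise_boundary_agree (s t : R) : on_boundary s t -> A s t = B s t.
Proof.
  destruct HAB as (gA & nA & gB & nB & _). apply boundary_agree; assumption.
Qed.

Let HM : is_defect_M A (D_M A) := D_M_is_defect A _ imprecise_M_bounded.
Let HO : is_defect_O B (D_O B) := D_O_is_defect B _ imprecise_O_bounded.

(* Both defects are squeezed between A - B and 0, hence vanish on the boundary. *)
Lemma Q_M_boundary (s t : R) : on_boundary s t -> Q_M A s t = A s t.
Proof.
  intros Hst. pose proof Hst as (hs & ht & _).
  pose proof (defect_M_le0 _ _ HM s t hs ht).
  pose proof (defect_M_ge _ _ HM _ s t imprecise_M_bounded hs ht).
  pose proof (imprecise_boundary_agree s t Hst). unfold Q_M. lra.
Qed.

Lemma Q_O_boundary (s t : R) : on_boundary s t -> Q_O B s t = B s t.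
Proof.
  intros Hst. pose proof Hst as (hs & ht & _).
  pose proof (defect_O_le0 _ _ HO s t hs ht).
  pose proof (defect_O_ge _ _ HO _ s t imprecise_O_bounded hs ht).
  pose proof (imprecise_boundary_agree s t Hst). unfold Q_O. lra.
Qed.

Lemma imprecise_lower_M :
  imprecise_copula A (Q_M A) /\ leQ A (Q_M A) /\ leQ (Q_M A) B.
Proof.
  destruct HAB as (gA & nA & _ & _ & _).
  destruct (boundary_transfer A (Q_M A) Q_M_boundary gA nA) as [gM nM].
  split; [| split].
  - refine (conj gA (conj nA (conj gM (conj nM _)))).
    intros s1 s2 t1 t2 Hr.
    pose proof (defect_M_le_SW _ _ HM _ _ _ _ Hr).
    pose proof (defect_M_le_NE _ _ HM _ _ _ _ Hr).
    pose proof (defect_M_exchange_SE _ _ HM _ _ _ _ Hr).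
    pose proof (defect_M_exchange_NW _ _ _ _ _ _ HM Hr).
    unfold Q_M, Vol in *. repeat split; lra.
  - intros s t hs ht. pose proof (defect_M_le0 _ _ HM s t hs ht). unfold Q_M. lra.
  - intros s t hs ht.
    pose proof (defect_M_ge _ _ HM _ s t imprecise_M_bounded hs ht). unfold Q_M. lra.
Qed.

Lemma imprecise_upper_O :
  imprecise_copula (Q_O B) B /\ leQ A (Q_O B) /\ leQ (Q_O B) B.
Proof.
  destruct HAB as (_ & _ & gB & nB & _).
  destruct (boundary_transfer B (Q_O B) Q_O_boundary gB nB) as [gO nO].
  split; [| split].
  - refine (conj gO (conj nO (conj gB (conj nB _)))).
    intros s1 s2 t1 t2 Hr.
    pose proof (defect_O_le_NW _ _ HO _ _ _ _ Hr).
    pose proof (defect_O_le_SE _ _ HO _ _ _ _ Hr).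
    pose proof (defect_O_exchange_SW _ _ HO _ _ _ _ Hr).
    pose proof (defect_O_exchange_NE _ _ HO _ _ _ _ Hr).
    unfold Q_O, Vol in *. repeat split; lra.
  - intros s t hs ht.
    pose proof (defect_O_ge _ _ HO _ s t imprecise_O_bounded hs ht). unfold Q_O. lra.
  - intros s t hs ht. pose proof (defect_O_le0 _ _ HO s t hs ht). unfold Q_O. lra.
Qed.

End ImpreciseCopula.

Theorem mainTheorem8 (A B : R -> R -> R) :
  imprecise_copula A B ->
  imprecise_copula A (Q_M A) /\ imprecise_copula (Q_O B) B /\
  leQ A (Q_M A) /\ leQ (Q_M A) B /\
  leQ A (Q_O B) /\ leQ (Q_O B) B.
Proof.
  intros HAB.
  destruct (imprecise_lower_M A B HAB) as (HM & le_A_M & le_M_B).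
  destruct (imprecise_upper_O A B HAB) as (HO & le_A_O & le_O_B).
  exact (conj HM (conj HO (conj le_A_M (conj le_M_B (conj le_A_O le_O_B))))).
Qed.
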